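(* Consider a finite population of $N$ units $i=1,\dots,N$ observed over two experiment iterations $t=1,2$. Each unit has a treatment path $\mathbf{Z}_i=(Z_{i,1},Z_{i,2})\in\{(c,c),(c,v_2),(v_1,v_2)\}$, where $c$ is control, $v_1$ is the treatment version used in iteration 1 and $v_2$ is the (possibly modified) version used in iteration 2. Each unit has fixed (non-random) potential outcomes $Y_{i,1}(z_1)$ for $z_1\in\{c,v_1,v_2\}$ and $Y_{i,2}(z_1,z_2)$ for $(z_1,z_2)\in\{(c,c),(c,v_2),(v_1,v_2)\}$. Assume the time-invariant control effect: $Y_{i,2}(c,v)-Y_{i,2}(c,c)=Y_{i,1}(v)-Y_{i,1}(c)$ for all $i$ and $v\in\{v_1,v_2\}$. Let fixed positive integers $N_{v_1},N_{c,v_2},N_{c,c}$ with $N_{v_1}+N_{c,v_2}+N_{c,c}=N$ be given (so that the iteration-1 treated proportion $p_1=N_{v_1}/N$ is strictly smaller than the iteration-2 treated proportion $p_2=(N_{v_1}+N_{c,v_2})/N$). The assignment is a two-iteration stepped-wedge completely randomized design: in iteration 1 a uniformly random set of $N_{v_1}$ units receives $v_1$ (and these units receive $v_2$ in iteration 2), and in iteration 2 a uniformly random subset of $N_{c,v_2}$ of the remaining units is moved from control to $v_2$; the other $N_{c,c}$ units stay in control in both iterations. The observed outcomes are $Y_{i,1}^{\mathrm{obs}}=Y_{i,1}(Z_{i,1})$ and $Y_{i,2}^{\mathrm{obs}}=Y_{i,2}(Z_{i,1},Z_{i,2})$. Define the population value of iterative experimentation $\tau_1=\frac1N\sum_{i=1}^N[Y_{i,1}(v_2)-Y_{i,1}(v_1)]$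 and the estimator $$\hat\tau_1=\frac{1}{N_{c,v_2}}\sum_{i=1}^N Y_{i,2}^{\mathrm{obs}}\mathbb{1}(\mathbf{Z}_i=(c,v_2))-\frac{1}{N_{v_1}}\sum_{i=1}^N Y_{i,1}^{\mathrm{obs}}\mathbb{1}(Z_{i,1}=v_1)-\frac{1}{N_{c,c}}\sum_{i=1}^N\big[Y_{i,2}^{\mathrm{obs}}-Y_{i,1}^{\mathrm{obs}}\big]\mathbb{1}(\mathbf{Z}_i=(c,c)).$$ Then $\mathbb{E}[\hat\tau_1]=\tau_1$ and $$\mathbb{V}[\hat\tau_1]=\frac{1}{N_{c,v_2}}S^2_{c,v_2}+\frac{1}{N_{v_1}}S^2_{v_1}+\frac{1}{N_{c,c}}S^2_{\Delta}-\frac1N S^2_\tau,$$ where, writing $\bar Y_2(c,v_2)=\frac1N\sum_i Y_{i,2}(c,v_2)$, $\bar Y_1(v_1)=\frac1N\sum_iY_{i,1}(v_1)$, $\bar Y_2(c,c)=\frac1N\sum_iY_{i,2}(c,c)$, $\bar Y_1(c)=\frac1N\sum_iY_{i,1}(c)$, $S^2_{c,v_2}=\frac{1}{N-1}\sum_i[Y_{i,2}(c,v_2)-\bar Y_2(c,v_2)]^2$, $S^2_{v_1}=\frac{1}{N-1}\sum_i[Y_{i,1}(v_1)-\bar Y_1(v_1)]^2$, $S^2_\Delta=\frac{1}{N-1}\sum_i[(Y_{i,2}(c,c)-Y_{i,1}(c))-(\bar Y_2(c,c)-\bar Y_1(c))]^2$, and $S^2_\tau=\frac{1}{N-1}\s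um_i[Y_{i,2}(c,v_2)-Y_{i,1}(v_1)-(Y_{i,2}(c,c)-Y_{i,1}(c))-\tau_1]^2$.
   Context: Expectations and variances are over the random assignment only; potential outcomes are fixed (finite-population, design-based framework). Writing potential outcomes as $Y_{i,1}(Z_{i,1})$ and $Y_{i,2}(Z_{i,1},Z_{i,2})$ encodes the paper's non-anticipation (iteration-1 outcomes do not depend on iteration-2 assignments) and no-interference (outcomes depend only on the unit's own path) assumptions. $Y_{i,1}(v_2)$ is a hypothetical potential outcome (the outcome had the final version been available in iteration 1). Under the time-invariant control effect, $\tau_1=\frac1N\sum_i[Y_{i,2}(c,v_2)-Y_{i,1}(v_1)-(Y_{i,2}(c,c)-Y_{i,1}(c))]$. *)

From HB Require Import structures.
From mathcomp Require Import all_boot all_order all_algebra.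
Unset Printing Implicit Defensive.
Import Order.TTheory GRing.Theory Num.Theory.
Local Open Scope ring_scope.

Inductive trt := Tc | Tv1 | Tv2.

Definition trt_eqb (a b : trt) : bool :=
  match a, b with
  | Tc, Tc | Tv1, Tv1 | Tv2, Tv2 => true
  | _, _ => false
  end.

Section Design.
Variables (R : realFieldType) (N Nv1 Ncv2 Ncc : nat).

(* An assignment is given by A (units treated with v1 in iteration 1) and
   B (units moved from control to v2 in iteration 2). *)
Definition Z1 (A B : {set 'I_N}) (i : 'I_N) : trt :=
  if i \in A then Tv1 else Tc.
Definition Z2 (A B : {set 'I_N}) (i : 'I_N) : trt :=
  if i \in A then Tv2 else if i \in B then Tv2 else Tc.

Definition ind (b : bool) : R := if b then 1 else 0.

Definition SWexp (f : {set 'I_N} -> {set 'I_N} -> R) : R :=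
  \sum_(A : {set 'I_N} | #|A| == Nv1)
     ('C(N, Nv1)%:R)^-1 *
     \sum_(B : {set 'I_N} | (B \subset ~: A) && (#|B| == Ncv2))
        ('C(N - Nv1, Ncv2)%:R)^-1 * f A B.

Definition SWvar (f : {set 'I_N} -> {set 'I_N} -> R) : R :=
  SWexp (fun A B => (f A B - SWexp f) ^+ 2).

Variables (Y1 : 'I_N -> trt -> R) (Y2 : 'I_N -> trt -> trt -> R).

Definition Yobs1 A B i : R := Y1 i (Z1 A B i).
Definition Yobs2 A B i : R := Y2 i (Z1 A B i) (Z2 A B i).

Definition tauhat1 (A B : {set 'I_N}) : R :=
  (Ncv2%:R)^-1 * \sum_(i < N) Yobs2 A B i *
       ind (trt_eqb (Z1 A B i) Tc && trt_eqb (Z2 A B i) Tv2)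
  - (Nv1%:R)^-1 * \sum_(i < N) Yobs1 A B i * ind (trt_eqb (Z1 A B i) Tv1)
  - (Ncc%:R)^-1 * \sum_(i < N) (Yobs2 A B i - Yobs1 A B i) *
       ind (trt_eqb (Z1 A B i) Tc && trt_eqb (Z2 A B i) Tc).

Definition tau1 : R := (N%:R)^-1 * \sum_(i < N) (Y1 i Tv2 - Y1 i Tv1).

Definition mean (f : 'I_N -> R) : R := (N%:R)^-1 * \sum_(i < N) f i.
Definition S2 (f : 'I_N -> R) : R :=
  ((N%:R - 1)^-1) * \sum_(i < N) (f i - mean f) ^+ 2.

Definition S2_cv2 : R := S2 (fun i => Y2 i Tc Tv2).
Definition S2_v1 : R := S2 (fun i => Y1 i Tv1).
Definition S2_Delta : R := S2 (fun i => Y2 i Tc Tc - Y1 i Tc).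
Definition S2_tau : R :=
  ((N%:R - 1)^-1) * \sum_(i < N)
     (Y2 i Tc Tv2 - Y1 i Tv1 - (Y2 i Tc Tc - Y1 i Tc) - tau1) ^+ 2.

End Design.

From HB Require Import structures.
From mathcomp Require Import all_boot all_order all_algebra.
From mathcomp Require Import ring lra zify.
Import Order.TTheory GRing.Theory Num.Theory.
Local Open Scope ring_scope.

(* Write a = Y2(c,v2), b = Y1(v1), d = Y2(c,c) - Y1(c); by time invariance of
   the control effect tau1 is the mean of a - b - d, and tauhat1 is the contrast
   of the arm means of a over B, b over A and d over the remaining units.
   Because the arm sizes are fixed, centring a, b, d shifts this contrast by
   exactly tau1, and the centred sum of d over the third arm is minus its sums
   over A and B; hence tauhat1 - tau1 = sum_(i in A) u i + sum_(i in B) w i for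
   two centred vectors u, w.  Its moments follow from the inclusion probabilities
   k/s and k(k-1)/(s(s-1)) of a uniform k-subset of an s-set, used for A and,
   given A, for B inside the complement of A; the variance then reduces to an
   identity between quadratic forms in the centred outcomes of a single unit. *)

Lemma natr_mul_bin_down (R : pzRingType) (n k : nat) :
  n%:R * 'C(n.-1, k)%:R = (n%:R - k%:R) * 'C(n, k)%:R :> R.
Proof.
have [le_kn | lt_nk] := leqP k n; first by rewrite -natrB // -!natrM mul_bin_down.
by rewrite !bin_small ?mulr0 //; lia.
Qed.

Lemma natr_bin_neq0 {R : numDomainType} {n k : nat} :
  (k <= n)%N -> 'C(n, k)%:R != 0 :> R.
Proof. by move=> le_kn; rewrite pnatr_eq0 -lt0n bin_gt0. Qed.

Section Draws.
Context {R : realFieldType} {T : finType}.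
Implicit Types (S X B : {set T}) (k : nat) (F G : {set T} -> R) (f g : T -> R).

Lemma sum_in_indicator B S f : B \subset S ->
  \sum_(i in B) f i = \sum_(i in S) f i * (i \in B)%:R.
Proof.
move=> BS; rewrite big_mkcond [RHS]big_mkcond; apply: eq_bigr => i _.
have [iB | niB] := boolP (i \in B); first by rewrite (subsetP BS i iB) mulr1.
by case: (i \in S); rewrite ?mulr0.
Qed.

Lemma sum_setC f X : \sum_(i in ~: X) f i = \sum_i f i - \sum_(i in X) f i.
Proof.
rewrite [in RHS](bigID (mem X)) /= addrAC subrr add0r.
by apply: eq_bigl => i; rewrite inE.
Qed.

Lemma sum_setT f : \sum_(i in [set: T]) f i = \sum_i f i.
Proof. by apply: eq_bigl => i; rewrite inE. Qed.

Definition draw_mean S k F : R :=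
  ('C(#|S|, k)%:R)^-1 * \sum_(B : {set T} | (B \subset S) && (#|B| == k)) F B.

Lemma draw_mean_ext {S k F} G :
  (forall B, B \subset S -> #|B| = k -> F B = G B) ->
  draw_mean S k F = draw_mean S k G.
Proof.
by move=> eqFG; congr (_ * _); apply: eq_bigr => B /andP[BS /eqP/(eqFG B BS)].
Qed.

Lemma draw_meanD S k F G :
  draw_mean S k (fun B => F B + G B) = draw_mean S k F + draw_mean S k G.
Proof. by rewrite /draw_mean big_split mulrDr. Qed.

Lemma draw_meanZ S k c F :
  draw_mean S k (fun B => c * F B) = c * draw_mean S k F.
Proof. by rewrite /draw_mean -mulr_sumr mulrCA. Qed.

Lemma draw_meanN S k F :
  draw_mean S k (fun B => - F B) = - draw_mean S k F.
Proof. by rewrite /draw_mean sumrN mulrN. Qed.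

Lemma draw_mean_sum (I : finType) (P : pred I) S k (F : I -> {set T} -> R) :
  draw_mean S k (fun B => \sum_(i | P i) F i B)
  = \sum_(i | P i) draw_mean S k (F i).
Proof. by rewrite /draw_mean exchange_big mulr_sumr. Qed.

Lemma draw_mean_indicator S k (P : pred {set T}) :
  draw_mean S k (fun B => (P B)%:R)
  = #|[set B : {set T} | [&& B \subset S, #|B| == k & P B]]|%:R / 'C(#|S|, k)%:R.
Proof.
rewrite /draw_mean mulrC -sum1dep_card natr_sum big_mkcond [in RHS]big_mkcond /=.
by congr (_ * _); apply: eq_bigr => B _; case: (B \subset S); case: (_ == k); case: (P B).
Qed.

Lemma draw_mean_cst S k c : (k <= #|S|)%N -> draw_mean S k (fun => c) = c.
Proof.
move=> le_kS; rewrite (draw_mean_ext (fun B => c * (predT B)%:R)); last first.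
  by move=> *; rewrite mulr1.
rewrite draw_meanZ draw_mean_indicator.
have -> : #|[set B : {set T} | [&& B \subset S, #|B| == k & predT B]]| = 'C(#|S|, k).
  by rewrite -cards_draws; apply: eq_card => B; rewrite !inE andbT.
by rewrite mulfV ?mulr1 ?natr_bin_neq0.
Qed.

Lemma draw_mean_disjoint X S k : X \subset S ->
  draw_mean S k (fun B => [disjoint B & X]%:R)
  = 'C(#|S| - #|X|, k)%:R / 'C(#|S|, k)%:R.
Proof.
move=> XS; rewrite draw_mean_indicator; congr (_%:R / _).
have -> : (#|S| - #|X|)%N = #|S :\: X| by rewrite cardsD (setIidPr XS).
rewrite -cards_draws.
by apply: eq_card => B; rewrite !inE subsetD andbAC -andbA.
Qed.

Lemma draw_mean_mem S k i : i \in S -> (k <= #|S|)%N ->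
  draw_mean S k (fun B => (i \in B)%:R) = k%:R / #|S|%:R.
Proof.
move=> iS le_kS; have S_gt0 : (0 < #|S|)%N by apply/card_gt0P; exists i.
rewrite (draw_mean_ext (fun B => 1 - [disjoint B & [set i]]%:R)); last first.
  by move=> B _ _; rewrite disjoint_sym disjoints1; case: (i \in B); rewrite /= ?subr0 ?subrr.
rewrite draw_meanD draw_meanN draw_mean_cst //.
rewrite draw_mean_disjoint ?sub1set // cards1 subn1.
have S0 : #|S|%:R != 0 :> R by rewrite pnatr_eq0 -lt0n.
have -> : 'C(#|S|.-1, k)%:R = (#|S|%:R - k%:R) * 'C(#|S|, k)%:R / #|S|%:R :> R.
  by rewrite -natr_mul_bin_down mulrC mulKf.
by field; rewrite S0 natr_bin_neq0.
Qed.

Lemma draw_mean_mem2 S k i j : i \in S -> j \in S -> i != j -> (k <= #|S|)%N ->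
  draw_mean S k (fun B => ((i \in B) && (j \in B))%:R)
  = k%:R * (k%:R - 1) / (#|S|%:R * (#|S|%:R - 1)).
Proof.
move=> iS jS ij le_kS.
have ijS : [set i; j] \subset S by rewrite subUset !sub1set iS.
have S_gt1 : (1 < #|S|)%N by have := subset_leq_card ijS; rewrite cards2 ij.
rewrite (draw_mean_ext (fun B =>
  (i \in B)%:R + (j \in B)%:R - 1 + [disjoint B & [set i; j]]%:R)); last first.
  move=> B _ _; rewrite disjoint_sym disjoints_subset subUset !sub1set !inE.
  by case: (i \in B); case: (j \in B); rewrite /=; ring.
rewrite !draw_meanD draw_meanN draw_mean_cst // !draw_mean_mem //.
rewrite draw_mean_disjoint // cards2 ij subn2.
have S0 : #|S|%:R != 0 :> R by rewrite pnatr_eq0 -lt0n ltnW.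
have S1 : #|S|.-1%:R != 0 :> R by rewrite pnatr_eq0 -lt0n; lia.
have eS : #|S|.-1%:R = #|S|%:R - 1 :> R by rewrite -subn1 natrB //; lia.
have e1 : 'C(#|S|.-1, k)%:R = (#|S|%:R - k%:R) * 'C(#|S|, k)%:R / #|S|%:R :> R.
  by rewrite -natr_mul_bin_down mulrC mulKf.
have e2 : 'C(#|S|.-2, k)%:R = (#|S|%:R - 1 - k%:R) * 'C(#|S|.-1, k)%:R / (#|S|%:R - 1) :> R.
  by rewrite -eS -natr_mul_bin_down mulrC mulKf.
rewrite e2 e1; field.
by rewrite S0 -eS S1 natr_bin_neq0.
Qed.

Lemma draw_mean_sum_in S k f : (k <= #|S|)%N ->
  draw_mean S k (fun B => \sum_(i in B) f i)
  = k%:R / #|S|%:R * \sum_(i in S) f i.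
Proof.
move=> le_kS; rewrite (draw_mean_ext
  (fun B => \sum_(i in S) f i * (i \in B)%:R)); last first.
  by move=> B BS _; apply: sum_in_indicator.
rewrite draw_mean_sum mulr_sumr; apply: eq_bigr => i iS.
by rewrite draw_meanZ draw_mean_mem // mulrC.
Qed.

Lemma draw_mean_sum_in_mul S k f g : (k <= #|S|)%N ->
  let p := k%:R / #|S|%:R in
  let q := k%:R * (k%:R - 1) / (#|S|%:R * (#|S|%:R - 1)) in
  draw_mean S k (fun B => (\sum_(i in B) f i) * \sum_(i in B) g i)
  = q * ((\sum_(i in S) f i) * \sum_(i in S) g i)
    + (p - q) * \sum_(i in S) f i * g i.
Proof.
move=> le_kS p q; rewrite (draw_mean_ext (fun B =>
  \sum_(i in S) \sum_(j in S) f i * g j * ((i \in B) && (j \in B))%:R)); last first.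
  move=> B BS _; rewrite !(sum_in_indicator _ _ _ BS) mulr_suml.
  apply: eq_bigr => i _; rewrite mulr_sumr; apply: eq_bigr => j _.
  by rewrite -mulnb natrM; ring.
rewrite draw_mean_sum (_ : q * _ + _ = \sum_(i in S)
  (q * (f i * \sum_(j in S) g j) + (p - q) * (f i * g i))); last first.
  by rewrite big_split /= -!mulr_sumr -mulr_suml.
apply: eq_bigr => i iS; rewrite draw_mean_sum (bigD1 i iS) [in RHS](bigD1 i iS) /=.
rewrite draw_meanZ (draw_mean_ext (fun B => (i \in B)%:R)); last first.
  by move=> B _ _; rewrite andbb.
rewrite draw_mean_mem // -/p.
rewrite (eq_bigr (fun j => q * (f i * g j))); last first.
  by move=> j /andP[jS ji]; rewrite draw_meanZ draw_mean_mem2 1?eq_sym // mulrC.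
by rewrite -!mulr_sumr; ring.
Qed.

End Draws.

Section SteppedWedge.
Context {R : realFieldType} {N n1 n2 n3 : nat}.
Hypothesis sum_n : (n1 + n2 + n3)%N = N.

Implicit Types (A B : {set 'I_N}) (f g : {set 'I_N} -> {set 'I_N} -> R).
Implicit Types (x y : 'I_N -> R).

Local Notation E := (SWexp R N n1 n2).

Lemma cardsC_fst (A : {set 'I_N}) : #|A| = n1 -> #|~: A| = (n2 + n3)%N.
Proof. by move=> cA; have := cardsC A; rewrite card_ord; lia. Qed.

Let n1_le_N : (n1 <= #|[set: 'I_N]|)%N. Proof. by rewrite cardsT card_ord; lia. Qed.
Let n2_le_C (A : {set 'I_N}) : #|A| = n1 -> (n2 <= #|~: A|)%N.
Proof. by move=> cA; rewrite (cardsC_fst _ cA) leq_addr. Qed.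

Lemma SWexp_draw_mean f :
  E f = draw_mean [set: 'I_N] n1 (fun A => draw_mean (~: A) n2 (f A)).
Proof.
rewrite /SWexp /draw_mean cardsT card_ord mulr_sumr.
apply: eq_big => [A | A /eqP cA]; first by rewrite subsetT.
rewrite (cardsC_fst _ cA) (_ : (N - n1)%N = (n2 + n3)%N) -?mulr_sumr //.
by lia.
Qed.

Lemma SWexp_ext {f} g :
  (forall A B, #|A| = n1 -> #|B| = n2 -> B \subset ~: A -> f A B = g A B) ->
  E f = E g.
Proof.
move=> eq_fg; rewrite !SWexp_draw_mean; apply: draw_mean_ext => A _ cA.
by apply: draw_mean_ext => B BA cB; apply: eq_fg.
Qed.

Lemma SWvar_ext {f} g :
  (forall A B, #|A| = n1 -> #|B| = n2 -> B \subset ~: A -> f A B = g A B) ->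
  SWvar R N n1 n2 f = SWvar R N n1 n2 g.
Proof.
move=> eq_fg; rewrite /SWvar (SWexp_ext g eq_fg); apply: SWexp_ext => A B cA cB BA.
by rewrite eq_fg.
Qed.

Lemma SWexpD f g : E (fun A B => f A B + g A B) = E f + E g.
Proof.
rewrite !SWexp_draw_mean -draw_meanD; apply: draw_mean_ext => A _ _.
exact: draw_meanD.
Qed.

Lemma SWexpZ c f : E (fun A B => c * f A B) = c * E f.
Proof.
rewrite !SWexp_draw_mean -draw_meanZ; apply: draw_mean_ext => A _ _.
exact: draw_meanZ.
Qed.

Lemma SWexp_fst (h : {set 'I_N} -> R) : E (fun A _ => h A) = draw_mean [set: 'I_N] n1 h.
Proof.
rewrite SWexp_draw_mean; apply: draw_mean_ext => A _ cA.
by rewrite draw_mean_cst ?n2_le_C.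
Qed.

Lemma SWexp_cst c : E (fun _ _ => c) = c.
Proof. by rewrite SWexp_fst draw_mean_cst. Qed.

Let natr_n1 : n1%:R = N%:R - (n2%:R + n3%:R) :> R.
Proof. by rewrite -sum_n -addnA !natrD addrK. Qed.

Lemma SWexp_sum_fst x :
  E (fun A _ => \sum_(i in A) x i) = n1%:R / N%:R * \sum_i x i.
Proof. by rewrite SWexp_fst draw_mean_sum_in // cardsT card_ord sum_setT. Qed.

Lemma meanB x y : mean R N (fun i => x i - y i) = mean R N x - mean R N y.
Proof. by rewrite /mean sumrB mulrBr. Qed.

Definition center x i := x i - mean R N x.

Lemma sum_center_in (X : {set 'I_N}) x :
  \sum_(i in X) center x i = \sum_(i in X) x i - #|X|%:R * mean R N x.
Proof. by rewrite sumrB sumr_const mulr_natl. Qed.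

Section Moments.
Hypotheses (n2_gt0 : (0 < n2)%N) (n3_gt0 : (0 < n3)%N).

Let N0 : N%:R != 0 :> R. Proof. by rewrite pnatr_eq0; lia. Qed.
Let N1 : N%:R - 1 != 0 :> R. Proof. by rewrite subr_eq0 pnatr_eq1; lia. Qed.
Let n23_0 : n2%:R + n3%:R != 0 :> R. Proof. by rewrite -natrD pnatr_eq0; lia. Qed.
Let n23_1 : n2%:R + n3%:R - 1 != 0 :> R.
Proof. by rewrite -natrD subr_eq0 pnatr_eq1; lia. Qed.

Lemma SWexp_sum_snd x :
  E (fun _ B => \sum_(i in B) x i) = n2%:R / N%:R * \sum_i x i.
Proof.
rewrite SWexp_draw_mean (draw_mean_ext (fun A =>
  n2%:R / (n2 + n3)%:R * (\sum_i x i - \sum_(i in A) x i))); last first.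
  by move=> A _ cA; rewrite draw_mean_sum_in ?n2_le_C // (cardsC_fst _ cA) sum_setC.
rewrite draw_meanZ draw_meanD draw_meanN draw_mean_cst // draw_mean_sum_in //.
by rewrite cardsT card_ord sum_setT natr_n1; field; rewrite N0 n23_0.
Qed.

Lemma SWexp_sum_fst_mul x y : \sum_i x i = 0 -> \sum_i y i = 0 ->
  E (fun A _ => (\sum_(i in A) x i) * \sum_(i in A) y i)
  = n1%:R * (N%:R - n1%:R) / (N%:R * (N%:R - 1)) * \sum_i x i * y i.
Proof.
move=> x0 y0; rewrite SWexp_fst draw_mean_sum_in_mul //.
by rewrite cardsT card_ord !sum_setT x0 y0; field; rewrite N0 N1.
Qed.

Lemma SWexp_sum_fst_snd_mul x y : \sum_i x i = 0 -> \sum_i y i = 0 ->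
  E (fun A B => (\sum_(i in A) x i) * \sum_(i in B) y i)
  = - (n1%:R * n2%:R / (N%:R * (N%:R - 1))) * \sum_i x i * y i.
Proof.
move=> x0 y0; rewrite SWexp_draw_mean (draw_mean_ext (fun A =>
  - (n2%:R / (n2%:R + n3%:R)) * ((\sum_(i in A) x i) * \sum_(i in A) y i))).
  rewrite draw_meanZ -SWexp_fst SWexp_sum_fst_mul // natr_n1.
  by field; rewrite N0 N1 n23_0.
move=> A _ cA; rewrite draw_meanZ draw_mean_sum_in ?n2_le_C //.
by rewrite (cardsC_fst _ cA) sum_setC y0 natrD; ring.
Qed.

Lemma SWexp_sum_snd_mul x y : \sum_i x i = 0 -> \sum_i y i = 0 ->
  E (fun _ B => (\sum_(i in B) x i) * \sum_(i in B) y i)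
  = n2%:R * (N%:R - n2%:R) / (N%:R * (N%:R - 1)) * \sum_i x i * y i.
Proof.
move=> x0 y0.
set p : R := n2%:R / (n2%:R + n3%:R).
set q : R := n2%:R * (n2%:R - 1) / ((n2%:R + n3%:R) * (n2%:R + n3%:R - 1)).
rewrite SWexp_draw_mean (draw_mean_ext (fun A =>
  q * ((\sum_(i in A) x i) * \sum_(i in A) y i)
  + (p - q) * (\sum_i x i * y i - \sum_(i in A) x i * y i))).
  rewrite draw_meanD !draw_meanZ -SWexp_fst SWexp_sum_fst_mul //.
  rewrite draw_meanD draw_meanN draw_mean_cst // draw_mean_sum_in //.
  rewrite cardsT card_ord sum_setT /p /q natr_n1.
  by field; rewrite N0 N1 n23_0 n23_1.
move=> A _ cA; rewrite draw_mean_sum_in_mul ?n2_le_C // (cardsC_fst _ cA).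
by rewrite !sum_setC x0 y0 natrD /p /q; ring.
Qed.

Lemma SWexp_linear t x y : \sum_i x i = 0 -> \sum_i y i = 0 ->
  E (fun A B => t + \sum_(i in A) x i + \sum_(i in B) y i) = t.
Proof.
move=> x0 y0; rewrite !SWexpD SWexp_cst SWexp_sum_fst SWexp_sum_snd x0 y0.
by rewrite !mulr0 !addr0.
Qed.

Lemma SWvar_linear t x y : \sum_i x i = 0 -> \sum_i y i = 0 ->
  SWvar R N n1 n2 (fun A B => t + \sum_(i in A) x i + \sum_(i in B) y i)
  = (N%:R * (N%:R - 1))^-1 * \sum_i
      (n1%:R * (N%:R - n1%:R) * (x i * x i) - 2 * n1%:R * n2%:R * (x i * y i)
       + n2%:R * (N%:R - n2%:R) * (y i * y i)).
Proof.
move=> x0 y0; rewrite /SWvar SWexp_linear // (SWexp_ext (fun A B =>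
  (\sum_(i in A) x i) * (\sum_(i in A) x i)
  + 2 * ((\sum_(i in A) x i) * (\sum_(i in B) y i))
  + (\sum_(i in B) y i) * (\sum_(i in B) y i))); last by move=> *; ring.
rewrite !SWexpD SWexpZ SWexp_sum_fst_mul // SWexp_sum_fst_snd_mul //.
rewrite SWexp_sum_snd_mul // !big_split sumrN /= -!mulr_sumr.
by field; rewrite N0 N1.
Qed.

Lemma sum_center x : \sum_i center x i = 0.
Proof. by rewrite sumrB sumr_const card_ord -mulr_natl /mean mulVKf ?subrr. Qed.

Section ArmContrast.
Hypothesis n1_gt0 : (0 < n1)%N.
Variables (a b d : 'I_N -> R).

Definition arm_contrast A B : R :=
  (n2%:R)^-1 * \sum_(i in B) a i - (n1%:R)^-1 * \sum_(i in A) b i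
  - (n3%:R)^-1 * \sum_(i in ~: (A :|: B)) d i.

Lemma arm_contrast_linear A B : #|A| = n1 -> #|B| = n2 -> B \subset ~: A ->
  arm_contrast A B
  = mean R N (fun i => a i - b i - d i)
    + \sum_(i in A) (center d i / n3%:R - center b i / n1%:R)
    + \sum_(i in B) (center a i / n2%:R + center d i / n3%:R).
Proof.
move=> cA cB BA; rewrite /arm_contrast; have AB : [disjoint A & B].
  by rewrite disjoint_sym disjoints_subset.
have -> : \sum_(i in ~: (A :|: B)) d i
          = \sum_i d i - \sum_(i in A) d i - \sum_(i in B) d i.
  rewrite sum_setC -addrA -opprD -bigU //=.
  by congr (_ - _); apply: eq_bigl => i; rewrite !inE.
rewrite !big_split sumrN /= -!mulr_suml !sum_center_in cA cB.
rewrite /mean !sumrB natr_n1.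
by field; rewrite -natr_n1 N0 !pnatr_eq0 -!lt0n n1_gt0 n2_gt0 n3_gt0.
Qed.

Let u i := center d i / n3%:R - center b i / n1%:R.
Let w i := center a i / n2%:R + center d i / n3%:R.

Let sum_u : \sum_i u i = 0.
Proof. by rewrite sumrB -!mulr_suml !sum_center !mul0r subrr. Qed.

Let sum_w : \sum_i w i = 0.
Proof. by rewrite big_split /= -!mulr_suml !sum_center !mul0r addr0. Qed.

Lemma SWexp_arm_contrast : E arm_contrast = mean R N (fun i => a i - b i - d i).
Proof. by rewrite (SWexp_ext _ arm_contrast_linear) SWexp_linear. Qed.

Lemma SWvar_arm_contrast :
  SWvar R N n1 n2 arm_contrast
  = (n2%:R)^-1 * S2 R N a + (n1%:R)^-1 * S2 R N b + (n3%:R)^-1 * S2 R N d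
    - (N%:R)^-1 * S2 R N (fun i => a i - b i - d i).
Proof.
rewrite (SWvar_ext _ arm_contrast_linear) SWvar_linear // /S2 !meanB.
rewrite !mulrA !mulr_sumr -!big_split -sumrB /=; apply: eq_bigr => i _.
(* A per-unit identity, valid only because N = n1 + n2 + n3. *)
rewrite /u /w /center natr_n1; field.
by rewrite -natr_n1 N0 N1 !pnatr_eq0 -!lt0n n1_gt0 n2_gt0 n3_gt0.
Qed.

End ArmContrast.
End Moments.
End SteppedWedge.
Arguments arm_contrast : clear implicits.

Lemma tauhat1E (R : realFieldType) (N Nv1 Ncv2 Ncc : nat)
    (Y1 : 'I_N -> trt -> R) (Y2 : 'I_N -> trt -> trt -> R) (A B : {set 'I_N}) :
  B \subset ~: A ->
  tauhat1 R N Nv1 Ncv2 Ncc Y1 Y2 A B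
  = arm_contrast R N Nv1 Ncv2 Ncc (fun i => Y2 i Tc Tv2) (fun i => Y1 i Tv1)
      (fun i => Y2 i Tc Tc - Y1 i Tc) A B.
Proof.
move=> BA; rewrite /tauhat1 /arm_contrast.
rewrite (sum_in_indicator B [set: 'I_N] _ (subsetT _))
  (sum_in_indicator A [set: 'I_N] _ (subsetT _))
  (sum_in_indicator (~: (A :|: B)) [set: 'I_N] _ (subsetT _)) !sum_setT.
congr (_ * _ - _ * _ - _ * _); apply: eq_bigr => i _.
all: rewrite /Yobs1 /Yobs2 /Z1 /Z2 /ind ?inE.
all: have [iA | niA] := boolP (i \in A); [
  have niB : i \notin B by apply: contraL iA => /(subsetP BA); rewrite inE
  | case: (i \in B)].
all: rewrite ?iA ?(negbTE niA) ?(negbTE niB) /=; ring.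
Qed.

Theorem theorem1 (R : realFieldType) (N Nv1 Ncv2 Ncc : nat)
  (hv1 : (0 < Nv1)%N) (hcv2 : (0 < Ncv2)%N) (hcc : (0 < Ncc)%N)
  (hN : (Nv1 + Ncv2 + Ncc)%N = N)
  (Y1 : 'I_N -> trt -> R) (Y2 : 'I_N -> trt -> trt -> R)
  (htic : forall (i : 'I_N) (v : trt), v = Tv1 \/ v = Tv2 ->
     Y2 i Tc v - Y2 i Tc Tc = Y1 i v - Y1 i Tc) :
  SWexp R N Nv1 Ncv2 (tauhat1 R N Nv1 Ncv2 Ncc Y1 Y2) = tau1 R N Y1
  /\ SWvar R N Nv1 Ncv2 (tauhat1 R N Nv1 Ncv2 Ncc Y1 Y2)
     = (Ncv2%:R)^-1 * S2_cv2 R N Y2 + (Nv1%:R)^-1 * S2_v1 R N Y1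
       + (Ncc%:R)^-1 * S2_Delta R N Y1 Y2 - (N%:R)^-1 * S2_tau R N Y1 Y2.
Proof.
pose a i := Y2 i Tc Tv2; pose b i := Y1 i Tv1; pose d i := Y2 i Tc Tc - Y1 i Tc.
have tau1E : tau1 R N Y1 = mean R N (fun i => a i - b i - d i).
  rewrite /tau1 /mean; congr (_ * _); apply: eq_bigr => i _.
  by have := htic i Tv2 (or_intror erefl); rewrite /a /b /d; lra.
have S2_tauE : S2_tau R N Y1 Y2 = S2 R N (fun i => a i - b i - d i).
  by rewrite /S2_tau /S2 tau1E.
have tauhat1_arm : forall A B : {set 'I_N}, #|A| = Nv1 -> #|B| = Ncv2 -> B \subset ~: A ->
    tauhat1 R N Nv1 Ncv2 Ncc Y1 Y2 A B = arm_contrast R N Nv1 Ncv2 Ncc a b d A B.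
  by move=> A B _ _; apply: tauhat1E.
split; first by rewrite (SWexp_ext hN _ tauhat1_arm) (SWexp_arm_contrast hN hcv2 hcc hv1) tau1E.
by rewrite (SWvar_ext hN _ tauhat1_arm) (SWvar_arm_contrast hN hcv2 hcc hv1) S2_tauE.
Qed.
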